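(* Let $G$ be a finite permutation group on a set $\Omega$ and let $A$ be an abelian regular subgroup of $G$ which is a maximal subgroup of $G$ and satisfies $N_G(A)=A$. Fix a point $1\in\Omega$, let $G_1$ be its stabilizer, for $s\in G$ let $G_s=s^{-1}G_1s$ denote the stabilizer of the point $1^s$, and let $N=\bigcap_{g\in G}A^g$ be the core of $A$ in $G$. Then there exist a prime $p$ and subgroups $Q\neq 1$ and $S\neq 1$ of $G$ such that: (1) $A/N$ is cyclic of order coprime to $p$; (2) $G_1$ is an elementary abelian $p$-group; (3) $G/N\cong (G_1N/N)\rtimes(A/N)$, and $G/N$ acts faithfully as an affine primitive group on the right cosets of $A$ in $G$; (4) $N=Z(G)=Q\times C_S(G_1)$; (5) $G=(G_1\times Q)\rtimes S$; (6) $A=Q\times S$; (7) $G_1\times Q$ is the unique Sylow $p$-subgroup of $G$; (8) $N_G(G_1)=C_G(G_1)=G_1\times N$; (9) for all $s,s'\in G\setminus N_G(G_1)$ we have $G_1G_s=G_1G_{s'}$.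
   Context: All groups are finite. A subgroup $A$ of a permutation group $G$ on $\Omega$ is regular if it acts transitively on $\Omega$ with trivial point-stabilizers. $Z(G)$ is the center, $C_X(Y)$ the centralizer and $N_X(Y)$ the normalizer of $Y$ in $X$. *)

From mathcomp Require Import all_boot all_fingroup all_solvable.
Set Implicit Arguments. Unset Strict Implicit. Unset Printing Implicit Defensive.

From mathcomp Require Import all_boot all_fingroup all_solvable.
From mathcomp Require Import zmodp mxrepresentation mxabelem.
Set Implicit Arguments. Unset Strict Implicit. Unset Printing Implicit Defensive.
Import GroupScope.

(* Let A be an abelian, regular, maximal and self-normalizing subgroup of the
   permutation group G, G1 the stabilizer of a point x0 and N = Z(G).
   1. Regularity gives G = G1 A with G1 :&: A = 1, and G1 is core-free.
   2. For an abelian maximal self-normalizing A, the centralizer in G of any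
      a in A :\: Z(G) is A; hence A :\: Z(G) is a TI-set with normalizer A and
      the core of A in G is Z(G).
   3. Counting the conjugates of A :\: Z(G) shows that K = G1 Z(G) is normal,
      so G/N = (K/N) ><| (A/N), with A/N acting semiregularly on K/N.
   4. A general study of such "affine" semidirect products (complement
      maximal, abelian and acting semiregularly) shows that the kernel is
      elementary abelian, the complement cyclic, and the action on the cosets
      of the complement faithful, primitive and regular on the kernel.
   5. With p the prime of G1, the p-part Q of A is central, P = G1 x Q is the
      normal Sylow p-subgroup and P ><| S = G for S the p'-part of A.
   6. For a in A :\: Z(G), the commutator map g |-> [g, a] is a bijection from
      G1 onto W = [P, S]; this yields N_G(G1) = G1 Z(G) (otherwise W = G1
      would be normal) and G1 G1^s = G1 W for every s outside N_G(G1). *)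

Section RegularSubgroup.

Variables (T : finType) (G A : {group {perm T}}) (x0 : T).
Hypotheses (sAG : A \subset G) (trA : [transitive A, on [set: T] | 'P])
           (regA : forall x : T, 'C_A[x | 'P] = 1).

Lemma stabJ x g : g \in G -> 'C_G[x | 'P] :^ g = 'C_G[aperm x g | 'P].
Proof. by move=> Gg; rewrite conjIg conjGid // astab1_act. Qed.

Lemma stab_regular_TI x : 'C_G[x | 'P] :&: A = 1.
Proof. by apply/trivgP; rewrite -(regA x) /= setIC setIS ?subsetIr. Qed.

Lemma stab_regular_mul : 'C_G[x0 | 'P] * A = G.
Proof.
apply/eqP; rewrite eqEsubset mul_subG ?subsetIl //=; apply/subsetP=> g Gg.
have [a Aa xga] := atransP2 trA (in_setT x0) (in_setT (aperm x0 g)).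
have Ga := subsetP sAG a Aa.
rewrite -(mulgKV a g) mem_mulg // inE groupM ?groupV //=.
apply/astab1P; rewrite /= apermE permM -(apermE x0 g) xga /=.
by rewrite apermE -permM mulgV perm1.
Qed.

(* A normal subgroup of G fixing one point fixes all of them. *)
Lemma stab_corefree (H : {group {perm T}}) :
  H \subset 'C_G[x0 | 'P] -> G \subset 'N(H) -> H :=: 1.
Proof.
move=> sHG1 nHG; apply/trivgP/subsetP => h Hh; rewrite inE; apply/eqP/permP => y.
have [a Aa ->] := atransP2 trA (in_setT x0) (in_setT y).
have Ga := subsetP sAG a Aa.
have sHGa : H \subset 'C_G[aperm x0 a | 'P].
  by rewrite -stabJ // -(normsP nHG a Ga) conjSg.
have /setIP[_ /astab1P] := subsetP sHGa h Hh.
by rewrite perm1 /= apermE.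
Qed.

End RegularSubgroup.

Section MaximalAbelian.

Variables (gT : finGroupType) (G A : {group gT}).
Hypotheses (abA : abelian A) (maxA : maximal A G) (selfnA : 'N_G(A) = A).

Let sAG : A \subset G. Proof. exact: proper_sub (maxgroupp maxA). Qed.
Let nZG : G \subset 'N('Z(G)). Proof. exact: normal_norm (center_normal G). Qed.

Lemma maximal_overgroup (H : {group gT}) :
  A \subset H -> H \subset G -> H :=: A \/ H :=: G.
Proof.
move=> sAH sHG; have [-> | prHG] := eqVproper sHG; [by right | left].
by case/maxgroupP: maxA => _ /(_ H prHG sAH).
Qed.

Lemma maximal_abelian_not_normal : ~~ (G \subset 'N(A)).
Proof.
apply: contraTN (maxgroupp maxA) => nAG.
by rewrite -selfnA (setIidPl nAG) properE subxx.
Qed.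

(* Z(G) A is a subgroup normalizing A, hence equal to A by maximality. *)
Lemma center_sub_maximal_abelian : 'Z(G) \subset A.
Proof.
have sAY : A \subset 'Z(G) <*> A := joing_subr _ _.
have sYG : 'Z(G) <*> A \subset G by rewrite join_subG center_sub.
have [<- | defY] := maximal_overgroup sAY sYG; first exact: joing_subl.
case/negP: maximal_abelian_not_normal; rewrite -defY join_subG normG andbT.
exact: subset_trans (subset_trans (subsetIr G _) (centS sAG)) (cent_sub A).
Qed.

Lemma cent1_noncentral a : a \in A -> a \notin 'Z(G) -> 'C_G[a] = A.
Proof.
move=> Aa nZa; have sAC : A \subset 'C_G[a].
  by rewrite subsetI sAG sub_cent1 (subsetP abA).
have [// | defC] := maximal_overgroup sAC (subsetIl _ _).
case/negP: nZa; rewrite inE (subsetP sAG) //=.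
by rewrite -sub_cent1 -defC subsetIr.
Qed.

Lemma conj_noncentral a g :
  a \in A -> a \notin 'Z(G) -> g \in G -> a ^ g \in A -> g \in A.
Proof.
move=> Aa nZa Gg Aag; rewrite -selfnA inE Gg; apply/normP.
have nZag : a ^ g \notin 'Z(G) by rewrite memJ_norm // (subsetP nZG).
rewrite -{1}(cent1_noncentral Aa nZa) -(cent1_noncentral Aag nZag).
by rewrite cent1J conjIg conjGid.
Qed.

Lemma gcore_maximal_abelian : gcore A G = 'Z(G).
Proof.
apply/eqP; rewrite eqEsubset sub_gcore ?center_sub_maximal_abelian // andbT.
apply/subsetP => n Nn; apply: contraR maximal_abelian_not_normal => nZn.
have sNA := gcore_sub A G; have nNG := gcore_norm A G.
apply/subsetP => g Gg; rewrite (subsetP (normG A)) //.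
rewrite (conj_noncentral (subsetP sNA n Nn) nZn Gg) //.
by rewrite (subsetP sNA) // memJ_norm // (subsetP nNG).
Qed.

Lemma maximal_abelian_normedTI : normedTI (A :\: 'Z(G)) G A.
Proof.
apply/normedTI_memJ_P; split => //.
  apply: contraNneq maximal_abelian_not_normal => /eqP; rewrite setD_eq0 => sAZ.
  have -> : A :=: 'Z(G) by apply/eqP; rewrite eqEsubset sAZ center_sub_maximal_abelian.
  exact: nZG.
move=> a g /setDP[Aa nZa] Gg; apply/idP/idP => [/setDP[Aag _] | Ag].
  exact: conj_noncentral Aa nZa Gg Aag.
rewrite inE memJ_norm ?(subsetP nZG) // nZa /= memJ_norm //.
by rewrite (subsetP (cent_sub A)) // (subsetP abA).
Qed.

End MaximalAbelian.

Section AffineQuotient.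

Variables (gT : finGroupType) (G K H : {group gT}).
Hypotheses (sdpG : K ><| H = G) (maxH : maximal H G) (abH : abelian H)
           (semiregK : semiregular K H) (ntK : K :!=: 1).

Let nsKG : K <| G. Proof. by case: (sdprod_context sdpG). Qed.
Let sHG : H \subset G. Proof. by case: (sdprod_context sdpG). Qed.
Let defG : K * H = G. Proof. by case: (sdprod_context sdpG). Qed.
Let nKH : H \subset 'N(K). Proof. by case: (sdprod_context sdpG). Qed.
Let tiKH : K :&: H = 1. Proof. by case: (sdprod_context sdpG). Qed.
Let Hin : (H : {set gT}) \in rcosets H G.
Proof. by rewrite -{1}(rcoset1 H) mem_rcosets mulSGid. Qed.

(* By maximality of H, K has no proper nontrivial H-invariant subgroup. *)
Lemma affine_invariant_sub (L : {group gT}) :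
  L \subset K -> H \subset 'N(L) -> L :=: 1 \/ L :=: K.
Proof.
move=> sLK nLH.
have sLG : L \subset G := subset_trans sLK (normal_sub nsKG).
have tiLH : L :&: H = 1 by apply/trivgP; rewrite -tiKH setSI.
have sLHG : L <*> H \subset G by rewrite join_subG sLG sHG.
have [eqLHG | prLHG] := eqVproper sLHG.
  right; apply/eqP; rewrite eqEcard sLK -(leq_pmul2r (cardG_gt0 H)).
  have cardLH : #|L * H| = (#|L| * #|H|)%N by rewrite TI_cardMg.
  by rewrite -cardLH -norm_joinEr // eqLHG -defG (TI_cardMg tiKH) leqnn.
left; case/maxgroupP: maxH => _ /(_ _ prLHG (joing_subr _ _)) eqLH.
by apply/trivgP; rewrite -tiLH subsetI subxx /= -eqLH joing_subl.
Qed.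

Lemma affine_coprime : coprime #|K| #|H|.
Proof. exact: regular_norm_coprime. Qed.

(* A coprime H-invariant Sylow subgroup and the Frattini subgroup of K are
   H-invariant, so K is a p-group with trivial Frattini subgroup. *)
Lemma affine_kernel_abelem : (pdiv #|K|).-abelem K.
Proof.
set p := pdiv #|K|.
have [P sylP nPH] :=
  sol_coprime_Sylow_exists p (abelian_sol abH) nKH affine_coprime.
have pK : p.-group K.
  have [P1 | <-] := affine_invariant_sub (pHall_sub sylP) nPH; last first.
    exact: pHall_pgroup sylP.
  case/and3P: sylP => _ _; rewrite P1 indexg1 p'natE ?pdiv_prime ?pdiv_dvd //.
  by rewrite cardG_gt1.
rewrite -trivg_Phi //.
have nPhiH : H \subset 'N('Phi(K)) := char_norm_trans (Phi_char K) nKH.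
have [-> // | ePhi] := affine_invariant_sub (Phi_sub K) nPhiH.
by have := Phi_proper ntK; rewrite ePhi properE subxx.
Qed.

Lemma affine_cent_trivial : 'C_H(K) = 1.
Proof.
apply/trivgP/subsetP => x /setIP[Hx cKx]; rewrite inE; apply: contraR ntK => ntx.
have /semiregK cK1 : x \in H^# by rewrite !inE ntx.
by rewrite -cK1 (setIidPl _) // sub_cent1.
Qed.

(* K is an irreducible faithful module for the abelian group H, so H is
   cyclic. *)
Lemma affine_complement_cyclic : cyclic H.
Proof.
have abelK := affine_kernel_abelem.
have minK : minnormal K H.
  apply/mingroupP; split=> [|L /andP[ntL nLH] sLK]; first by rewrite ntK nKH.
  by have [L1 | //] := affine_invariant_sub sLK nLH; rewrite L1 eqxx in ntL.
have faithfulK := abelem_mx_faithful abelK ntK nKH affine_cent_trivial.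
have irrK := (abelem_mx_irrP abelK ntK nKH) minK.
exact: mx_faithful_irr_abelian_cyclic faithfulK irrK abH.
Qed.

(* K is a complement to the stabilizer H of the coset H, so it is transitive. *)
Lemma affine_transitive : [transitive K, on rcosets H G | 'Rs].
Proof.
apply/(subgroup_transitiveP Hin (normal_sub nsKG) (transRs_rcosets H G)).
by rewrite astab1Rs (setIidPr sHG) (normC nKH).
Qed.

(* Point stabilizers of K on the cosets of H are conjugates of K :&: H = 1. *)
Lemma affine_regular X : X \in rcosets H G -> 'C_K[X | 'Rs] = 1.
Proof.
case/rcosetsP => g Gg ->.
rewrite -rcosetE astab1_act astab1Rs -{1}(normP (subsetP (normal_norm nsKG) g Gg)).
by rewrite -conjIg tiKH conjs1g.
Qed.

(* The core of H is normal and meets K trivially, so it centralizes K. *)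
Lemma affine_faithful : [faithful G, on rcosets H G | 'Rs].
Proof.
rewrite /faithful astabRs_rcosets subIset //; apply/orP; right.
have sCH := gcore_sub H G; have nCG := gcore_norm H G.
have sCK : gcore H G \subset 'C(K).
  apply/commG1P/trivgP; rewrite -tiKH subsetI.
  rewrite commg_subr (subset_trans sCH nKH) /= (subset_trans _ sCH) //.
  by rewrite commg_subl (subset_trans (normal_sub nsKG) nCG).
by rewrite -affine_cent_trivial subsetI sCH.
Qed.

(* The point stabilizer H is maximal, so the action is primitive. *)
Lemma affine_primitive : [primitive G, on rcosets H G | 'Rs].
Proof.
rewrite (trans_prim_astab Hin (transRs_rcosets _ _)) astab1Rs (setIidPr sHG).
by rewrite /maximal_eq maxH orbT.
Qed.

End AffineQuotient.

Section Theorem3p2.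

Variables (T : finType) (G A : {group {perm T}}) (x0 : T).
Hypotheses (abA : abelian A) (trA : [transitive A, on [set: T] | 'P])
           (regA : forall x : T, 'C_A[x | 'P] = 1)
           (maxA : maximal A G) (selfnA : 'N_G(A) = A).

Local Notation G1 := 'C_G[x0 | 'P]%G.
Local Notation N := 'Z(G)%G.
Local Notation K := (G1 <*> N)%G.

Let sAG : A \subset G. Proof. exact: proper_sub (maxgroupp maxA). Qed.
Let sG1G : G1 \subset G. Proof. exact: subsetIl. Qed.
Let sNA : N \subset A. Proof. exact: center_sub_maximal_abelian. Qed.
Let cNG : N \subset 'C(G). Proof. exact: subsetIr. Qed.
Let nNG : G \subset 'N(N). Proof. exact: normal_norm (center_normal G). Qed.
Let tiG1A : G1 :&: A = 1. Proof. exact: stab_regular_TI. Qed.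
Let defG : G1 * A = G. Proof. exact: stab_regular_mul. Qed.
Let tiG1N : G1 :&: N = 1. Proof. by apply/trivgP; rewrite -tiG1A setIS. Qed.
Let cNG1 : N \subset 'C(G1). Proof. exact: subset_trans cNG (centS sG1G). Qed.

(* K = G1 Z(G) is the candidate kernel of the affine action of G/Z(G). *)
Lemma kernel_mulE : K :=: G1 * N.
Proof. by rewrite /= norm_joinEl // (subset_trans sG1G nNG). Qed.

Lemma kernel_card : #|K| = (#|G1| * #|N|)%N.
Proof. by rewrite kernel_mulE TI_cardMg. Qed.

Lemma index_point_stab : #|G : A| = #|G1|.
Proof.
apply/eqP; rewrite -(eqn_pmul2l (cardG_gt0 A)) (Lagrange sAG) mulnC.
by rewrite -TI_cardMg ?defG.
Qed.

(* No conjugate of a noncentral element of A lies in G1 Z(G): otherwise a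
   conjugate of a point stabilizer would meet A nontrivially. *)
Lemma kernel_support_disjoint : [disjoint K & class_support (A :\: N) G].
Proof.
rewrite -setI_eq0 kernel_mulE; apply/eqP/setP => x; rewrite !inE.
apply/negP => /andP[/mulsgP[h n G1h Nn ->]].
case/imset2P => b g /setDP[Ab nNb] Gg /(congr1 (conjg^~ g^-1)); rewrite conjgK => eb.
have Ngn : n ^ g^-1 = n.
  by rewrite conjgE invgK (centP (subsetP cNG n Nn) g^-1) ?groupV // mulKVg.
have : h ^ g^-1 \in 'C_G[aperm x0 g^-1 | 'P] :&: A.
  apply/setIP; split; first by rewrite -stabJ ?groupV // memJ_conjg.
  have -> : h ^ g^-1 = b * n^-1 by rewrite -eb conjMg Ngn mulgK.
  by rewrite groupM ?groupV ?(subsetP sNA n Nn).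
rewrite stab_regular_TI // => /set1gP /(canRL (conjgK g^-1)); rewrite conj1g => h1.
by move: nNb; rewrite -eb h1 mul1g Ngn Nn.
Qed.

(* Counting with the trivial-intersection set A :\: Z(G) shows that G1 Z(G)
   is the complement in G of the conjugates of A :\: Z(G); hence it is normal. *)
Lemma kernel_normal : K <| G.
Proof.
have sKG : K \subset G by rewrite join_subG sG1G (subset_trans sNA sAG).
have sXG : class_support (A :\: N) G \subset G.
  by rewrite class_support_sub_norm // subDset subsetU // sAG orbT.
have defK : K :=: G :\: class_support (A :\: N) G.
  apply/eqP; rewrite eqEcard subsetD sKG kernel_support_disjoint /=.
  have TI_AZ := maximal_abelian_normedTI abA maxA selfnA.
  rewrite cardsDS // (card_support_normedTI TI_AZ).
  rewrite cardsDS // index_point_stab kernel_card -(Lagrange sAG) index_point_stab.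
  by rewrite mulnBl subKn ?leq_mul2r ?subset_leq_card ?orbT // mulnC.
by rewrite /normal sKG defK normsD ?normG ?class_support_norm.
Qed.

Let nsKG : K <| G. Proof. exact: kernel_normal. Qed.
Let sNK : N \subset K. Proof. exact: joing_subr. Qed.
Let nsNA : N <| A. Proof. by rewrite /normal sNA (subset_trans sAG nNG). Qed.

Lemma kernel_meet_complement : K :&: A = N.
Proof. by rewrite setIC kernel_mulE -group_modr // (setIC A) tiG1A mul1g. Qed.

Lemma kernel_mul_complement : K * A = G.
Proof. by rewrite kernel_mulE -mulgA (mulSGid sNA) defG. Qed.

Lemma quotient_kernel_sdprod : (K / N) ><| (A / N) = G / N.
Proof.
have nNK := subset_trans (normal_sub nsKG) nNG; have nNA := normal_norm nsNA.
rewrite sdprodE -?quotientMl ?kernel_mul_complement //.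
  exact: quotient_norms (subset_trans sAG (normal_norm nsKG)).
by rewrite -quotientGI // kernel_meet_complement trivg_quotient.
Qed.

(* N lies in A, so maximality passes to the quotient. *)
Lemma quotient_complement_maximal : maximal (A / N) (G / N).
Proof. by rewrite quotient_maximal ?center_normal. Qed.

(* A noncentral coset aN of A/N centralizes kN in K/N only if k conjugates a
   into aN, inside A; then k lies in A :&: K = N. *)
Lemma quotient_semiregular : semiregular (K / N) (A / N).
Proof.
have nNA := normal_norm nsNA; have nNK := subset_trans (normal_sub nsKG) nNG.
move=> x /setD1P[ntx /morphimP[a Na Aa def_x]]; subst x.
apply/trivgP/subsetP => y /setIP[/morphimP[k Nk Kk def_y] /cent1P cka]; subst y.
rewrite /= in ntx cka *.
have nZa : a \notin N by apply: contra ntx => Za; rewrite coset_id.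
have Gk := subsetP (normal_sub nsKG) k Kk.
suff Zk : k \in N by rewrite coset_id ?group1.
rewrite -kernel_meet_complement inE Kk (conj_noncentral abA maxA selfnA Aa nZa Gk) //.
have : coset N (a ^ k) = coset N a by rewrite morphJ // /conjg -cka mulKg.
move/rcoset_kercosetP; rewrite groupJ // => /(_ isT Na) /rcosetP[n Nn ->].
by rewrite groupM // (subsetP sNA).
Qed.

(* As A is a proper subgroup and G = G1 A, the stabilizer G1 is nontrivial. *)
Lemma point_stab_nontrivial : G1 :!=: 1.
Proof.
apply: contraTneq (maxgroupp maxA) => G1_1.
by rewrite properEcard sAG -defG G1_1 mul1g ltnn.
Qed.

Lemma point_stab_isog_quotient : G1 \isog K / N.
Proof.
by rewrite /= quotientYidr ?quotient_isog ?(subset_trans sG1G nNG) // setIC.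
Qed.

Lemma quotient_kernel_nontrivial : K / N :!=: 1.
Proof.
rewrite -cardG_gt1 -(card_isog point_stab_isog_quotient) cardG_gt1.
exact: point_stab_nontrivial.
Qed.

Local Notation p := (pdiv #|G1|).

Let card_quotient_kernel : #|K / N| = #|G1|.
Proof. exact/esym/card_isog/point_stab_isog_quotient. Qed.

Lemma quotient_kernel_abelem : p.-abelem (K / N).
Proof.
rewrite -card_quotient_kernel.
exact: affine_kernel_abelem quotient_kernel_sdprod quotient_complement_maximal
  (quotient_abelian N abA) quotient_semiregular quotient_kernel_nontrivial.
Qed.

Lemma point_stab_abelem : p.-abelem G1.
Proof. by rewrite (isog_abelem point_stab_isog_quotient) quotient_kernel_abelem. Qed.

Lemma point_stab_prime : prime p.
Proof. by rewrite pdiv_prime // cardG_gt1 point_stab_nontrivial. Qed.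

Lemma quotient_complement_cyclic : cyclic (A / N).
Proof.
exact: affine_complement_cyclic quotient_kernel_sdprod quotient_complement_maximal
  (quotient_abelian N abA) quotient_semiregular quotient_kernel_nontrivial.
Qed.

Lemma quotient_complement_coprime : coprime #|A / N| p.
Proof.
have coKA := affine_coprime quotient_kernel_sdprod quotient_semiregular.
by rewrite coprime_sym (coprime_dvdl _ coKA) // card_quotient_kernel pdiv_dvd.
Qed.

Local Notation Q := 'O_p(A)%G.
Local Notation S := 'O_p^'(A)%G.
Local Notation P := (G1 <*> Q)%G.

Lemma complement_pcore_dprod : Q \x S = A.
Proof. exact/nilpotent_pcoreC/abelian_nil. Qed.

(* A/N is a p'-group, so the p-part of A lies in the center. *)
Lemma pcore_sub_center : Q \subset N.
Proof.
have nNQ := subset_trans (pcore_sub p A) (normal_norm nsNA).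
rewrite -(quotient_sub1 nNQ) subG1 trivg_card1; apply/eqP.
apply: (pnat_1 (quotient_pgroup N (pcore_pgroup p A))).
apply: pgroupS (quotientS N (pcore_sub p A)) _.
rewrite /pgroup p'natE ?point_stab_prime // -prime_coprime ?point_stab_prime //.
by rewrite coprime_sym quotient_complement_coprime.
Qed.

Let cQG : Q \subset 'C(G). Proof. exact: subset_trans pcore_sub_center cNG. Qed.
Let cQG1 : Q \subset 'C(G1). Proof. exact: subset_trans cQG (centS sG1G). Qed.

Lemma sylow_dprod : G1 \x Q = P.
Proof.
have tiG1Q : G1 :&: Q = 1 by apply/trivgP; rewrite -tiG1A setIS ?pcore_sub.
exact: dprodEY cQG1 tiG1Q.
Qed.

Lemma sylow_card : #|P| = (#|G1| * #|Q|)%N.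
Proof. by rewrite (dprod_card sylow_dprod). Qed.

Lemma sylow_pgroup : p.-group P.
Proof.
rewrite -(dprodW sylow_dprod) pgroupM (abelem_pgroup point_stab_abelem).
exact: pcore_pgroup.
Qed.

Lemma sylow_sub : P \subset G.
Proof. by rewrite join_subG sG1G (subset_trans (pcore_sub p A) sAG). Qed.

Lemma sylow_is_sylow : p.-Sylow(G) P.
Proof.
rewrite /pHall sylow_sub sylow_pgroup -divgS ?sylow_sub // -defG TI_cardMg //.
rewrite -(dprod_card complement_pcore_dprod) sylow_card mulnA mulKn.
  exact: pcore_pgroup.
by rewrite muln_gt0 !cardG_gt0.
Qed.

(* P is a normal Hall subgroup of the normal subgroup K = G1 Z(G), hence its
   p-core, which is characteristic in K and therefore normal in G. *)
Lemma sylow_normal : P <| G.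
Proof.
have sPK : P \subset K.
  by rewrite join_subG joing_subl (subset_trans pcore_sub_center sNK).
have nsPK : P <| K.
  rewrite /normal sPK join_subG (subset_trans (joing_subl G1 Q) (normG P)) /=.
  by rewrite (subset_trans (subset_trans cNG (centS sylow_sub)) (cent_sub P)).
have sylPK := pHall_subl sPK (normal_sub nsKG) sylow_is_sylow.
rewrite -(normal_Hall_pcore sylPK nsPK).
exact: char_normal_trans (pcore_char p K) nsKG.
Qed.

Lemma sylow_unique : 'Syl_p(G) = [set P].
Proof.
have /cards1P[P' defSyl] : #|'Syl_p(G)| == 1%N.
  by rewrite (card_Syl sylow_is_sylow) (setIidPl (normal_norm sylow_normal)) indexgg.
have : P \in 'Syl_p(G) by rewrite inE sylow_is_sylow.
by rewrite defSyl => /set1P <-.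
Qed.

(* P is complemented by the p'-group S, since G = G1 Q S. *)
Lemma sylow_sdprod : P ><| S = G.
Proof.
have sSG := subset_trans (pcore_sub p^' A) sAG.
have [_ defA _ _] := dprodP complement_pcore_dprod.
rewrite sdprodE ?(subset_trans sSG (normal_norm sylow_normal)) //.
  by rewrite -(dprodW sylow_dprod) -mulgA defA.
exact/coprime_TIg/(pnat_coprime sylow_pgroup)/pcore_pgroup.
Qed.

(* The elements of S centralizing G1 are those central in G = G1 A. *)
Lemma center_dprod : Q \x 'C_S(G1) = N.
Proof.
have [_ defA cSQ tiQS] := dprodP complement_pcore_dprod.
have defCS : 'C_S(G1) = S :&: N.
  apply/eqP; rewrite eqEsubset andbC setIS //=.
  apply/subsetP => s /setIP[Ss cs]; rewrite inE Ss inE.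
  have As := subsetP (pcore_sub p^' A) s Ss.
  rewrite (subsetP sAG) //= -sub_cent1 -defG.
  by rewrite mul_subG ?sub_cent1 ?(subsetP abA).
rewrite defCS dprodE ?(subset_trans (subsetIl S N)) //.
  by rewrite group_modl ?pcore_sub_center // defA (setIidPr sNA).
by apply/trivgP; rewrite -tiQS setIS ?subsetIl.
Qed.

Local Notation W := [~: P, S]%G.

(* W meets the p-part Q of A trivially (coprime action on the abelian P),
   so |W| <= |P : Q| = |G1|. *)
Lemma commutator_card_le : #|W| <= #|G1|.
Proof.
have abP : abelian P.
  rewrite -(dprodW sylow_dprod) abelianM (abelem_abelian point_stab_abelem).
  by rewrite (abelianS (pcore_sub p A) abA) cQG1.
have [_ _ nPS _] := sdprodP sylow_sdprod.
have coPS : coprime #|P| #|S| := pnat_coprime sylow_pgroup (pcore_pgroup _ _).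
have cQS : Q \subset 'C(S) by rewrite centsC; case/dprodP: complement_pcore_dprod.
have tiWQ : W :&: Q = 1.
  by apply/trivgP; rewrite -(coprime_abel_cent_TI nPS coPS abP) setIS.
have sWQ : W * Q \subset P by rewrite mul_subG ?commg_subl ?nPS ?joing_subr.
rewrite -(leq_pmul2r (cardG_gt0 Q)) -TI_cardMg // -sylow_card.
exact: subset_leq_card sWQ.
Qed.

(* For a in A :\: Z(G), the map g |-> [g, a] is injective on G1, as G1 meets
   C_G[a] = A trivially. *)
Lemma commutator_injective a :
  a \in A -> a \notin N -> {in G1 &, injective (fun g => [~ g, a])}.
Proof.
move=> Aa nZa g h G1g G1h /= eq_gh.
have : h * g^-1 \in G1 :&: A.
  rewrite inE groupM ?groupV //= -(cent1_noncentral abA maxA Aa nZa).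
  rewrite inE groupM ?groupV ?(subsetP sG1G) //=.
  have eha : h ^ a = h * g^-1 * g ^ a.
    by rewrite -mulgA -commgEl eq_gh commgEl mulKVg.
  by apply/cent1P/commgP/conjg_fixP; rewrite conjMg conjVg eha mulgK.
by rewrite tiG1A => /set1gP/eqP; rewrite mulg_eq1 invgK => /eqP.
Qed.

(* The image of g |-> [g, a] lies in W and, by counting, is all of W. *)
Lemma commutator_image a : a \in A -> a \notin N -> [set [~ g, a] | g in G1] = W.
Proof.
move=> Aa nZa; apply/eqP; rewrite eqEcard (card_in_imset (commutator_injective Aa nZa)).
rewrite commutator_card_le andbT; apply/subsetP => _ /imsetP[g G1g ->].
have [_ defA _ _] := dprodP complement_pcore_dprod.
have /mulsgP[q s Qq Ss ->] : a \in Q * S by rewrite defA.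
have cgq : [~ g, q] = 1.
  by apply/eqP/commgP; rewrite /commute (centP (subsetP cQG1 q Qq) g G1g).
by rewrite commgMJ cgq conj1g mulg1 mem_commg // (subsetP (joing_subl G1 Q)).
Qed.

(* If a in A :\: Z(G) normalized G1, then W = G1 would be normalized by
   P S = G, contradicting the core-freeness of G1. *)
Lemma normalizer_point_stab : 'N_G(G1) = G1 * N.
Proof.
have sG1N : G1 * N \subset 'N_G(G1).
  rewrite mul_subG //= !subsetI ?sG1G ?normG ?(subset_trans sNA sAG) //.
  exact: subset_trans cNG1 (cent_sub G1).
apply/eqP; rewrite eqEsubset sG1N andbT.
apply/subsetP => x /setIP[Gx nG1x]; move: Gx.
rewrite -defG => /mulsgP[g a G1g Aa def_x].
rewrite def_x mem_mulg //; apply/idPn => nZa; case/negP: point_stab_nontrivial.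
have nG1a : a \in 'N(G1) by rewrite -(groupMl _ (subsetP (normG G1) g G1g)) -def_x.
have sWG1 : W \subset G1.
  rewrite -(commutator_image Aa nZa); apply/subsetP => _ /imsetP[h G1h ->].
  by rewrite commgEl groupM ?groupV // memJ_norm.
have eWG1 : W :=: G1.
  apply/eqP; rewrite eqEcard sWG1 -(commutator_image Aa nZa).
  by rewrite (card_in_imset (commutator_injective Aa nZa)) leqnn.
have nWG : G \subset 'N(W).
  by rewrite -{1}(sdprodW sylow_sdprod) mul_subG ?commg_norml ?commg_normr.
by rewrite -eWG1 (stab_corefree sAG trA sWG1 nWG).
Qed.

(* G1 is abelian and N central, so C_G(G1) lies between G1 N and N_G(G1). *)
Lemma centralizer_point_stab : 'C_G(G1) = G1 * N.
Proof.
apply/eqP; rewrite eqEsubset -{1}normalizer_point_stab setIS ?cent_sub //=.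
rewrite mul_subG //= subsetI ?sG1G ?(subset_trans sNA sAG) //.
exact: abelem_abelian point_stab_abelem.
Qed.

Lemma centralizer_point_stab_dprod : G1 \x N = 'C_G(G1).
Proof. by rewrite centralizer_point_stab dprodE. Qed.

(* Writing s = g a with g in G1 and a in A :\: Z(G), the product G1 G1^s equals
   G1 G1^a = G1 {[h, a] | h in G1} = G1 W, independently of s. *)
Lemma point_stab_conj_mul s : s \in G :\: 'N_G(G1) -> G1 * (G1 :^ s) = G1 * W.
Proof.
case/setDP => Gs nG1s; have := Gs; rewrite -defG => /mulsgP[g a G1g Aa def_s].
have nZa : a \notin N.
  by apply: contra nG1s => Za; rewrite normalizer_point_stab def_s mem_mulg.
rewrite def_s conjsgM conjGid // -(commutator_image Aa nZa).
apply/setP => x; apply/mulsgP/mulsgP.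
  case=> y _ G1y /imsetP[h G1h ->] ->.
  exists (y * h) [~ h, a]; [exact: groupM | exact: imset_f |].
  by rewrite conjg_mulR mulgA.
case=> y _ G1y /imsetP[h G1h ->] ->.
exists (y * h^-1) (h ^ a); first by rewrite groupM ?groupV.
  by rewrite memJ_conjg.
by rewrite conjg_mulR -(mulgA y) mulKg.
Qed.

(* If Q = 1 then G1 = P would be normal in G. *)
Lemma pcore_nontrivial : Q :!=: 1.
Proof.
apply: contra point_stab_nontrivial => /eqP Q1.
have eP : P :=: G1 by rewrite /= Q1 joingG1.
have sPG1 : P \subset G1 by rewrite eP.
by rewrite -eP (stab_corefree sAG trA sPG1 (normal_norm sylow_normal)).
Qed.

(* If S = 1 then A = Q would be central, hence normal in G. *)
Lemma pcore'_nontrivial : S :!=: 1.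
Proof.
apply: contra (maximal_abelian_not_normal maxA selfnA) => /eqP S1.
have [_ defA _ _] := dprodP complement_pcore_dprod.
have sAN : A \subset N by rewrite -defA S1 mulg1 pcore_sub_center.
by rewrite (subset_trans _ (cent_sub A)) // centsC (subset_trans sAN cNG).
Qed.

End Theorem3p2.

Theorem theorem3p2 (T : finType) (G A G1 N : {group {perm T}}) (x0 : T)
  (sAG : A \subset G) (abA : abelian A)
  (trA : [transitive A, on [set: T] | 'P])
  (regA : forall x : T, 'C_A[x | 'P] = 1)
  (maxA : maximal A G)
  (selfnA : 'N_G(A) = A)
  (defG1 : G1 :=: 'C_G[x0 | 'P])
  (defN : N :=: gcore A G) :
  exists p : nat, exists Q S : {group {perm T}},
  [/\ prime p, Q :!=: 1 /\ S :!=: 1, Q \subset G, S \subset G &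
  [/\ (* (1) *) cyclic (A / N) /\ coprime #|A / N| p,
      (* (2) *) p.-abelem G1,
      (* (3) *) [/\ ((G1 <*> N) / N) ><| (A / N) = G / N,
                   [faithful G / N, on rcosets (A / N) (G / N) | 'Rs],
                   [primitive G / N, on rcosets (A / N) (G / N) | 'Rs]
                 & [/\ p.-abelem ((G1 <*> N) / N), (G1 <*> N) / N <| G / N,
                       [transitive (G1 <*> N) / N, on rcosets (A / N) (G / N) | 'Rs]
                     & forall X, X \in rcosets (A / N) (G / N) ->
                         'C_((G1 <*> N) / N)[X | 'Rs] = 1]],
      (* (4) *) N :=: 'Z(G) /\ Q \x 'C_S(G1) = N &
   [/\ (* (5) *) G1 \x Q = G1 <*> Q /\ (G1 <*> Q) ><| S = G,
      (* (6) *) Q \x S = A,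
      (* (7) *) 'Syl_p(G) = [set (G1 <*> Q)%G],
      (* (8) *) 'N_G(G1) = 'C_G(G1) /\ G1 \x N = 'C_G(G1) &
      (* (9) *) forall s s', s \in G :\: 'N_G(G1) -> s' \in G :\: 'N_G(G1) ->
                  G1 * (G1 :^ s) = G1 * (G1 :^ s')]]].
Proof.
have eG1 : G1 = 'C_G[x0 | 'P]%G by apply: val_inj.
have eN : N = 'Z(G)%G by apply: val_inj; rewrite /= defN gcore_maximal_abelian.
subst G1 N; pose p := pdiv #|'C_G[x0 | 'P]|.
have sdpG := quotient_kernel_sdprod x0 abA trA regA maxA selfnA.
have semiregK := quotient_semiregular x0 abA trA regA maxA selfnA.
have ntK := quotient_kernel_nontrivial x0 trA regA maxA selfnA.
have maxAN := quotient_complement_maximal maxA selfnA.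
exists p, 'O_p(A)%G, 'O_p^'(A)%G; rewrite {}/p; split.
- exact: (point_stab_prime x0 trA maxA).
- split; [exact: (pcore_nontrivial x0 abA trA regA maxA selfnA) |].
  exact: (pcore'_nontrivial x0 abA trA regA maxA selfnA).
- exact: subset_trans (pcore_sub _ _) sAG.
- exact: subset_trans (pcore_sub _ _) sAG.
split.
- split; [exact: (quotient_complement_cyclic x0 abA trA regA maxA selfnA) |].
  exact: (quotient_complement_coprime x0 abA trA regA maxA selfnA).
- exact: (point_stab_abelem x0 abA trA regA maxA selfnA).
- split; [by [] | exact: affine_faithful sdpG semiregK ntK |
          exact: affine_primitive sdpG maxAN |].
  split; [exact: (quotient_kernel_abelem x0 abA trA regA maxA selfnA) | |
          exact: affine_transitive sdpG | exact: affine_regular sdpG].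
  exact/quotient_normal/(kernel_normal x0 abA trA regA maxA selfnA).
- by split; [| exact: (center_dprod x0 abA trA regA maxA selfnA)].
split.
- split; [exact: (sylow_dprod x0 abA trA regA maxA selfnA) |].
  exact: (sylow_sdprod x0 abA trA regA maxA selfnA).
- exact: (complement_pcore_dprod G x0 abA).
- exact: (sylow_unique x0 abA trA regA maxA selfnA).
- split; last exact: (centralizer_point_stab_dprod x0 abA trA regA maxA selfnA).
  rewrite (centralizer_point_stab x0 abA trA regA maxA selfnA).
  exact: (normalizer_point_stab x0 abA trA regA maxA selfnA).
- by move=> s s' Ns Ns'; rewrite !(point_stab_conj_mul abA trA regA maxA selfnA).
Qed.
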